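(* There exists an explicit family of triangle-free graphs on $n$ vertices (with $n$ arbitrarily large) where $\overline{\chi}_f\ge n/2$ whereas the broadcast rate satisfies $\beta\le\frac38 n$.
   Context: For an undirected graph $G$ on vertex set $[n]$, consider the index coding problem: a server holds messages $x_1,\dots,x_n\in\Sigma$ ($|\Sigma|>1$), receiver $i$ wants $x_i$ and knows $x_j$ for every neighbor $j$ of $i$. A solution is an encoding $\mathcal{E}:\Sigma^n\to\Sigma_P$ from which each receiver can recover its message given its side information, for all message values. $\beta_t(G)$ is the minimum of $\lceil\log_2|\Sigma_P|\rceil$ over solutions with $|\Sigma|=2^t$, and the broadcast rate is $\beta(G)=\lim_t\beta_t(G)/t=\inf_t\beta_t(G)/t$. $\overline{\chi}_f(G)$ is the fractional clique-cover number: the minimum total weight of a nonnegative weighting of cliques of $G$ covering each vertex with total weight at least $1$. *)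

From HB Require Import structures.
From mathcomp Require Import all_boot all_order all_algebra.
From mathcomp Require Import classical_sets reals.
From mathcomp Require Import Rstruct.
From Stdlib Require Rdefinitions.
Notation R := Rdefinitions.R.
Set Implicit Arguments. Unset Strict Implicit. Unset Printing Implicit Defensive.
Import Order.TTheory GRing.Theory Num.Theory.
Local Open Scope ring_scope.
Local Open Scope classical_set_scope.

Definition simple_graph (n : nat) (e : rel 'I_n) : Prop :=
  symmetric e /\ irreflexive e.

Definition triangle_free (n : nat) (e : rel 'I_n) : Prop :=
  forall i j k : 'I_n, ~ [&& e i j, e j k & e i k].

Definition is_clique (n : nat) (e : rel 'I_n) (S : {set 'I_n}) : bool :=
  [forall i in S, forall j in S, (i != j) ==> e i j].

Definition frac_clique_cover (n : nat) (e : rel 'I_n) (w : {set 'I_n} -> R) : Prop :=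
  (forall S, 0 <= w S) /\
  (forall S, ~~ is_clique e S -> w S = 0) /\
  (forall v : 'I_n, 1 <= \sum_(S : {set 'I_n} | is_clique e S && (v \in S)) w S).

Definition frac_clique_cover_number (n : nat) (e : rel 'I_n) : R :=
  inf [set \sum_(S : {set 'I_n} | is_clique e S) w S | w in frac_clique_cover e].

(* Messages over the alphabet Sigma = 'I_(2^t) (|Sigma| = 2^t); the encoding takes
   values in a set Sigma_P of size k, represented as 'I_k.  E is a solution if every
   receiver i has a decoder which, from the broadcast E x and its side information
   (the values x_j for neighbours j of i -- i.e. the decoder's dependence on x is only
   through these coordinates), recovers x_i, for all message values x. *)
Definition ic_solution (n : nat) (e : rel 'I_n) (t k : nat)
    (E : {ffun 'I_n -> 'I_(2 ^ t)} -> 'I_k) : Prop :=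
  exists D : 'I_n -> 'I_k -> {ffun 'I_n -> 'I_(2 ^ t)} -> 'I_(2 ^ t),
    (forall i c (x y : {ffun 'I_n -> 'I_(2 ^ t)}),
        (forall j, e i j -> x j = y j) -> D i c x = D i c y) /\
    (forall i (x : {ffun 'I_n -> 'I_(2 ^ t)}), D i (E x) x = x i).

Definition beta_t (n : nat) (e : rel 'I_n) (t : nat) : R :=
  inf [set ((up_log 2 k)%:R : R) | k in
        [set k : nat | exists E : {ffun 'I_n -> 'I_(2 ^ t)} -> 'I_k, ic_solution e E]].

(* broadcast rate beta(G) = inf_{t >= 1} beta_t(G)/t  (|Sigma| = 2^t > 1 forces t >= 1) *)
Definition broadcast_rate (n : nat) (e : rel 'I_n) : R :=
  inf [set beta_t e t / (t%:R : R) | t in [set t : nat | (0 < t)%N]].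

From mathcomp Require Import all_boot all_order all_algebra.
From mathcomp Require Import classical_sets boolp reals Rstruct.
From mathcomp Require Import lra.
Import Order.TTheory GRing.Theory Num.Theory.
Local Open Scope ring_scope.

Set Implicit Arguments. Unset Strict Implicit. Unset Printing Implicit Defensive.

(* The graph is a disjoint union of copies of the Clebsch graph.  Being
   triangle-free, it has cliques of size at most 2, so every fractional clique
   cover has weight at least n/2.  On the other hand I + A of the Clebsch graph
   has rank 6 over F_2; a matrix over F_2 with ones on the diagonal and zeros
   off the edges yields a linear index code (Haemers' minrank bound), so one
   bit per vertex is broadcast in 6 bits per copy, i.e. beta <= 6/16 n. *)

Section CliqueCover.
Variables (n : nat) (e : rel 'I_n).

Lemma is_clique_set1 (v : 'I_n) : is_clique e [set v].
Proof.
apply/forallP => i; apply/implyP => /set1P ->; apply/forallP => j.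
by apply/implyP => /set1P ->; rewrite eqxx.
Qed.

Lemma triangle_free_clique_card (S : {set 'I_n}) :
  triangle_free e -> is_clique e S -> (#|S| <= 2)%N.
Proof.
move=> tf /forallP cl; rewrite leqNgt; apply/negP => /card_gt2P [x [y [z]]].
move=> [[xS yS zS] [xy yz zx]].
have eS u v : u \in S -> v \in S -> u != v -> e u v.
  by move=> uS vS uv; move: (cl u); rewrite uS /= => /forallP /(_ v); rewrite vS uv.
by apply: (tf x y z); rewrite !eS // eq_sym.
Qed.

Definition singleton_weight (S : {set 'I_n}) : R :=
  if [exists v, S == [set v]] then 1 else 0.

Lemma frac_clique_cover_singletons : frac_clique_cover e singleton_weight.
Proof.
split; [|split].
- by move=> S; rewrite /singleton_weight; case: ifP.
- move=> S ncl; rewrite /singleton_weight; case: ifP => // /existsP [v /eqP SE].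
  by rewrite SE is_clique_set1 in ncl.
- move=> v; rewrite (bigD1 [set v]) /=; last by rewrite is_clique_set1 set11.
  rewrite {1}/singleton_weight.
  have -> : [exists u, [set v] == [set u]] by apply/existsP; exists v.
  by rewrite lerDl sumr_ge0 // => S _; rewrite /singleton_weight; case: ifP.
Qed.

(* Double counting the incidences (v, S) with v in S. *)
Lemma frac_clique_cover_card_sum w : frac_clique_cover e w ->
  n%:R <= \sum_(S : {set 'I_n} | is_clique e S) #|S|%:R * w S :> R.
Proof.
move=> [_ [_ wv]]; rewrite -[n in n%:R]card_ord -sumr_const.
apply: (le_trans (ler_sum _ (fun v _ => wv v))).
under eq_bigr do rewrite big_mkcond /=.
rewrite exchange_big /= [leRHS]big_mkcond /=; apply: ler_sum => S _.
case: (boolP (is_clique e S)) => cS /=; last by rewrite big1.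
by rewrite -big_mkcond /= sumr_const mulr_natl.
Qed.

Lemma frac_clique_cover_number_ge c : (0 < c)%N ->
  (forall S, is_clique e S -> (#|S| <= c)%N) ->
  n%:R / c%:R <= frac_clique_cover_number e.
Proof.
move=> c_gt0 clique_le; apply: lb_le_inf.
  by eexists; exists singleton_weight; [exact: frac_clique_cover_singletons|].
move=> _ [w cover <-]; rewrite ler_pdivrMr ?ltr0n // mulrC mulr_sumr.
apply: (le_trans (frac_clique_cover_card_sum cover)); apply: ler_sum => S cS.
by apply: ler_wpM2r; [case: cover => -> | rewrite ler_nat clique_le].
Qed.

End CliqueCover.

Lemma inf_ge0 (T : realType) (A : set T) : (forall x, A x -> 0 <= x) -> 0 <= inf A.
Proof.
move=> A_ge0; case: (pselect (has_inf A)) => [[A0 _]|noinf].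
- exact: lb_le_inf.
- by rewrite inf_out.
Qed.

Lemma beta_t_ge0 n (e : rel 'I_n) t : 0 <= beta_t e t.
Proof. by apply: inf_ge0 => x [k _ <-]. Qed.

Lemma beta_t_le_up_log n (e : rel 'I_n) t k
    (E : {ffun 'I_n -> 'I_(2 ^ t)} -> 'I_k) :
  ic_solution e E -> beta_t e t <= (up_log 2 k)%:R.
Proof.
move=> solE; apply: ge_inf; last by exists k => //; exists E.
by exists 0 => _ [k' _ <-].
Qed.

Lemma broadcast_rate_le_beta_t n (e : rel 'I_n) t : (0 < t)%N ->
  broadcast_rate e <= beta_t e t / t%:R.
Proof.
move=> t_gt0; apply: ge_inf; last by exists t.
by exists 0 => _ [t' _ <-]; rewrite divr_ge0 ?beta_t_ge0.
Qed.

(* Haemers' notion; the least rank of a matrix fitting [e] is its minrank. *)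
Definition fits n (e : rel 'I_n) (M : 'I_n -> 'I_n -> 'Z_2) : Prop :=
  (forall i, M i i = 1) /\ (forall i j, i != j -> ~~ e i j -> M i j = 0).

Section LinearIndexCode.
Variables (n : nat) (e : rel 'I_n) (K : finType).
Variables (U : 'I_n -> K -> 'Z_2) (V : K -> 'I_n -> 'Z_2).
Hypothesis UV_fits : fits e (fun i j => \sum_k U i k * V k j).

Local Notation msg := {ffun 'I_n -> 'I_(2 ^ 1)}.
Local Notation codeword := {ffun K -> 'Z_2}.

Definition lin_code (x : msg) : codeword := [ffun k => \sum_j V k j * x j].

Definition lin_enc (x : msg) : 'I_#|{: codeword}| := enum_rank (lin_code x).

(* Receiver [i] reads off [\sum_j M i j x_j] and removes its neighbours' terms. *)
Definition lin_dec (i : 'I_n) (c : 'I_#|{: codeword}|) (x : msg) : 'I_(2 ^ 1) :=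
  \sum_k U i k * enum_val c k
  - \sum_(j | (j != i) && e i j) (\sum_k U i k * V k j) * x j.

Lemma lin_enc_solution : ic_solution e lin_enc.
Proof.
have [M_diag M_off] := UV_fits.
exists lin_dec; split.
  move=> i c x y xy; congr (_ - _); apply: eq_bigr => j /andP [_ eij].
  by rewrite xy.
move=> i x; rewrite /lin_dec enum_rankK.
have -> : \sum_k U i k * lin_code x k
    = \sum_j (\sum_k U i k * V k j) * (x j : 'Z_2).
  under eq_bigr do rewrite ffunE mulr_sumr.
  by rewrite exchange_big; apply: eq_bigr => j _; rewrite mulr_suml;
    apply: eq_bigr => k _; rewrite mulrA.
rewrite (bigD1 i) //= M_diag mul1r (bigID (e i)) /=.
rewrite [X in _ + (_ + X)]big1 ?addr0 ?addrK // => j /andP [ji nij].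
by rewrite M_off ?mul0r // eq_sym.
Qed.

Lemma broadcast_rate_le_fits : broadcast_rate e <= #|K|%:R.
Proof.
apply: (le_trans (broadcast_rate_le_beta_t e (isT : 0 < 1)%N)).
rewrite divr1; apply: (le_trans (beta_t_le_up_log lin_enc_solution)).
by rewrite ler_nat card_ffun card_ord up_log_min.
Qed.

End LinearIndexCode.

Section DisjointUnion.
Variables (s : nat) (g : rel 'I_s.+1) (m : nat).
Local Notation n := (m * s.+1)%N.

Lemma blk_proof (i : 'I_n) : (i %/ s.+1 < m)%N.
Proof. by rewrite ltn_divLR. Qed.

Definition blk (i : 'I_n) : 'I_m := Ordinal (blk_proof i).
Definition loc (i : 'I_n) : 'I_s.+1 := Ordinal (@ltn_pmod i s.+1 isT).

Lemma blk_loc_inj (i j : 'I_n) : blk i = blk j -> loc i = loc j -> i = j.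
Proof.
move=> /(congr1 val) /= bij /(congr1 val) /= lij; apply: val_inj => /=.
by rewrite (divn_eq i s.+1) (divn_eq j s.+1) bij lij.
Qed.

Definition union_rel : rel 'I_n :=
  fun i j => (blk i == blk j) && g (loc i) (loc j).

Lemma union_simple : simple_graph g -> simple_graph union_rel.
Proof.
move=> [gC gI]; split=> [i j|i]; rewrite /union_rel.
- by rewrite eq_sym gC.
- by rewrite gI andbF.
Qed.

Lemma union_triangle_free : triangle_free g -> triangle_free union_rel.
Proof.
move=> tf i j k /and3P [/andP [_ gij] /andP [_ gjk] /andP [_ gik]].
by apply: (tf (loc i) (loc j) (loc k)); rewrite gij gjk.
Qed.

Variables (K : finType) (U : 'I_s.+1 -> K -> 'Z_2) (V : K -> 'I_s.+1 -> 'Z_2).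

Definition union_U (i : 'I_n) (p : 'I_m * K) : 'Z_2 :=
  (blk i == p.1)%:R * U (loc i) p.2.
Definition union_V (p : 'I_m * K) (j : 'I_n) : 'Z_2 :=
  (blk j == p.1)%:R * V p.2 (loc j).

Lemma union_UV i j : \sum_p union_U i p * union_V p j
  = (blk i == blk j)%:R * \sum_k U (loc i) k * V k (loc j).
Proof.
rewrite -(pair_bigA _ (fun b k => union_U i (b, k) * union_V (b, k) j)) /=.
rewrite (bigD1 (blk i)) //= [X in _ + X]big1 ?addr0; last first.
  by move=> b /negPf bi; apply: big1 => k _; rewrite /union_U /= eq_sym bi !mul0r.
rewrite mulr_sumr; apply: eq_bigr => k _.
by rewrite /union_U /union_V /= eqxx mul1r [blk j == _]eq_sym mulrCA mulrA.
Qed.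

Lemma union_fits : fits g (fun a b => \sum_k U a k * V k b) ->
  fits union_rel (fun i j => \sum_p union_U i p * union_V p j).
Proof.
move=> [M_diag M_off]; split=> [i|i j ij nij]; rewrite union_UV.
  by rewrite eqxx M_diag mul1r.
have [bij|] := eqVneq (blk i) (blk j); last by rewrite mul0r.
rewrite M_off ?mulr0 //; last by move: nij; rewrite /union_rel bij eqxx.
by apply: contra ij => /eqP lij; rewrite (blk_loc_inj bij lij).
Qed.

End DisjointUnion.

(* Hamming distance at least 3 on 4-bit words gives the Clebsch graph. *)
Definition bit (a k : nat) := odd (a %/ 2 ^ k).
Definition hamming (a b : nat) := count (fun k => bit a k != bit b k) (iota 0 4).
Definition clebsch_adj (a b : nat) := (3 <= hamming a b)%N.
Definition clebsch : rel 'I_16 := fun a b => clebsch_adj a b.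

(* Rows of a factorisation I + A = U V^T over F_2 with inner dimension 6, each
   row written as a 6-bit word. *)
Definition clebsch_U_rows := [:: 1;2;4;8;16;28;26;25;32;44;42;41;62;61;59;55]%N.
Definition clebsch_V_rows := [:: 1;2;4;56;24;36;34;33;40;20;18;17;14;13;11;55]%N.

Definition clebsch_U (a : 'I_16) (k : 'I_6) : 'Z_2 :=
  (bit (nth 0%N clebsch_U_rows a) k)%:R.
Definition clebsch_V (k : 'I_6) (a : 'I_16) : 'Z_2 :=
  (bit (nth 0%N clebsch_V_rows a) k)%:R.

Lemma all_iota_ord (p : pred nat) r : all p (iota 0 r) -> forall i : 'I_r, p i.
Proof. by move=> /allP pr i; apply: pr; rewrite mem_iota ltn_ord. Qed.

Lemma clebsch_triangle_free : triangle_free clebsch.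
Proof.
have tf : all (fun a => all (fun b => all (fun c =>
    ~~ [&& clebsch_adj a b, clebsch_adj b c & clebsch_adj a c])
    (iota 0 16)) (iota 0 16)) (iota 0 16) by vm_compute.
move=> a b c; apply/negP.
by move: tf => /all_iota_ord/(_ a)/all_iota_ord/(_ b)/all_iota_ord/(_ c).
Qed.

Lemma clebsch_simple : simple_graph clebsch.
Proof.
split=> [a b|a]; rewrite /clebsch /clebsch_adj /hamming.
- by congr (_ <= _)%N; apply: eq_count => k; rewrite eq_sym.
- by under eq_count => k do rewrite eqxx; rewrite count_pred0.
Qed.

Lemma clebsch_UV (a b : 'I_16) :
  \sum_k clebsch_U a k * clebsch_V k b = ((a == b) || clebsch a b)%:R.
Proof.
have UV : all (fun a => all (fun b =>
    odd (count (fun k => bit (nth 0%N clebsch_U_rows a) k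
                         && bit (nth 0%N clebsch_V_rows b) k) (iota 0 6))
    == (a == b) || clebsch_adj a b) (iota 0 16)) (iota 0 16) by vm_compute.
move: UV => /all_iota_ord/(_ a)/all_iota_ord/(_ b)/eqP <-.
rewrite -modn2 (@Zp_nat_mod 2) // -sum1_count -[iota 0 6]/(index_iota 0 6).
rewrite big_mkord natr_sum [RHS]big_mkcond /=.
apply: eq_bigr => k _; rewrite /clebsch_U /clebsch_V -natrM.
by case: (bit _ k); case: (bit _ k).
Qed.

Lemma clebsch_fits : fits clebsch (fun a b => \sum_k clebsch_U a k * clebsch_V k b).
Proof.
split=> [a|a b ab nab]; rewrite clebsch_UV ?eqxx //.
by rewrite (negPf ab) (negPf nab).
Qed.

Theorem theorem4p1 :
  forall N : nat, exists n : nat, (N <= n)%N /\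
    exists e : rel 'I_n,
      simple_graph e /\ triangle_free e /\
      (n%:R / 2 : R) <= frac_clique_cover_number e /\
      broadcast_rate e <= 3 / 8 * (n%:R : R).
Proof.
move=> N; exists (N.+1 * 16)%N; split.
  exact: leq_trans (leqnSn N) (leq_pmulr N.+1 (isT : 0 < 16)%N).
have tf := union_triangle_free (m := N.+1) clebsch_triangle_free.
exists (union_rel clebsch (m := N.+1)); split; first exact: union_simple clebsch_simple.
split=> //; split.
  by apply: frac_clique_cover_number_ge => // S; apply: triangle_free_clique_card.
apply: le_trans (broadcast_rate_le_fits (union_fits N.+1 clebsch_fits)) _.
rewrite card_prod !card_ord !natrM; lra.
Qed.
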